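(* Let $k\geq 3$ and $\mathbf{x}=(x_1,\ldots,x_n)\in\Delta^{n-1}$, and let $\sigma=\sigma(\mathbf{x})$. If $|\mathbf{x}|_{\max}\leq 1/(4(k-2))$, then \[ S_k(\mathbf{x})<\sigma^k\binom{1/\sigma}{k}, \] unless the nonzero entries of $\mathbf{x}$ are equal.
   Context: $\Delta^{n-1}=\{\mathbf{x}\in\mathbb{R}^n: x_i\geq0 \text{ for all } i,\ \sum_i x_i=1\}$. $S_k(\mathbf{x})$ denotes the $k$-th elementary symmetric polynomial of $x_1,\ldots,x_n$. $\sigma(\mathbf{x})=x_1^{x_1}\cdots x_n^{x_n}$, with the convention $0^0=1$. $|\mathbf{x}|_{\max}=\max_i x_i$. For real $s$, $\binom{s}{k}=s(s-1)\cdots(s-k+1)/k!$, so that $\sigma^k\binom{1/\sigma}{k}=\frac{1}{k!}(1-\sigma)(1-2\sigma)\cdots(1-(k-1)\sigma)$. *)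

From HB Require Import structures.
From mathcomp Require Import all_boot all_order all_algebra.
From mathcomp Require Import reals exp.
Set Implicit Arguments. Unset Strict Implicit. Unset Printing Implicit Defensive.
Import Order.TTheory GRing.Theory Num.Theory.
Local Open Scope ring_scope.

Definition in_simplex (R : realType) (n : nat) (x : 'I_n -> R) : Prop :=
  (forall i, 0 <= x i) /\ \sum_(i < n) x i = 1.

Definition elem_sym (R : realType) (n k : nat) (x : 'I_n -> R) : R :=
  \sum_(I : {set 'I_n} | #|I| == k) \prod_(i in I) x i.

(* sigma(x) = prod x_i^{x_i}, with 0^0 = 1 (powR 0 0 = 1). *)
Definition sigma (R : realType) (n : nat) (x : 'I_n -> R) : R :=
  \prod_(i < n) powR (x i) (x i).

Definition rbinom (R : realType) (s : R) (k : nat) : R :=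
  (\prod_(j < k) (s - j%:R)) / (k`!)%:R.

(* Maximum entry |x|_max (for n = 0 it is 0, irrelevant on the simplex). *)
Definition max_entry (R : realType) (n : nat) (x : 'I_n -> R) : R :=
  \big[Num.max/0]_(i < n) x i.

(** Write [e_m] for the elementary symmetric sums of [x], [sigma] for
    [sigma(x)] and [b_m] for [sigma^m binom(1/sigma, m)], so that
    [(m+1) b_(m+1) = (1 - m sigma) b_m].  Since [log sigma = sum_i x_i log x_i],
    weighted AM-GM gives [sum_i x_i^2 > sigma], i.e. [e_2 < b_2], unless all
    nonzero [x_i] equal [sigma].  It then suffices to prove
    [(m+1) e_(m+1) <= (1 - m sigma) e_m] for [2 <= m < k], as [m sigma < 1].
    With [E_i] the elementary symmetric sums of degree [m - 1] of [x] without
    [x_i], this reduces to [sum_i x_i (x_i - sigma) E_i >= 0].  Writing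
    [x_i - sigma = g_i + sigma L_i] with [L_i = log (x_i / sigma)] and
    [g_i = x_i - sigma - sigma L_i >= 0], the [L_i] average to zero and are
    oppositely ordered to the [E_i], so Chebyshev's sum inequality disposes
    of the cross terms; the rest follows from the logarithmic inequality
    [(t - 1) log t <= 2 max(t, 1) (t - 1 - log t)] at [t = x_i / sigma] and
    the smallness of [|x|_max].  Only [3 (k - 2) |x|_max <= 1] is needed. *)

From mathcomp Require Import classical_sets reals topology normedtype sequences derive realfun exp.
From mathcomp Require Import all_boot all_order all_algebra.
From mathcomp Require Import ring lra zify.
Import Order.TTheory GRing.Theory Num.Theory.
Import numFieldNormedType.Exports.
Local Open Scope ring_scope.

Set Implicit Arguments.
Unset Strict Implicit.
Unset Printing Implicit Defensive.

Section LnInequalities.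
Variable R : realType.
Local Open Scope classical_set_scope.

Lemma ln_le_sub1 (t : R) : 0 < t -> ln t <= t - 1.
Proof. by move=> t_gt0; have := expR_ge1Dx (ln t); rewrite lnK ?posrE //; lra. Qed.

Lemma ln_lt_sub1 (t : R) : 0 < t -> t != 1 -> ln t < t - 1.
Proof.
move=> t_gt0 t_neq1; have /expR_gt1Dx : ln t != 0 by rewrite ln_eq0.
by rewrite lnK ?posrE //; lra.
Qed.

Lemma ln_sub_mul_sub_ge0 (a b : R) : 0 < a -> 0 < b -> 0 <= (ln a - ln b) * (a - b).
Proof.
move=> a_gt0 b_gt0; have [ab|ba] := leP a b.
  by apply: mulr_le0; rewrite subr_le0 // ler_ln ?posrE.
by apply: mulr_ge0; rewrite subr_ge0 ?ler_ln ?posrE // ltW.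
Qed.

Lemma is_derive_ge0_le (f df : R -> R) (a b : R) : a <= b ->
  (forall u, a <= u <= b -> is_derive u 1 f (df u)) ->
  (forall u, a <= u <= b -> 0 <= df u) -> f a <= f b.
Proof.
move=> ab f_df df_ge0; rewrite -subr_ge0.
have f_df' u : u \in `]a, b[%R -> is_derive u 1 f (df u).
  by rewrite in_itv /= => /andP[au ub]; apply: f_df; rewrite !ltW.
have f_cont : {within `[a, b], continuous f}.
  apply: continuous_in_subspaceT => u /set_mem; rewrite /= in_itv /= => uab.
  by apply: differentiable_continuous; apply/derivable1_diffP; case: (f_df u uab).
have [c cab ->] := MVT_segment ab f_df' f_cont.
by rewrite mulr_ge0 ?subr_ge0 // df_ge0 // -in_itv.
Qed.

Lemma ln_le_sqr_sub1 (t : R) : 1 <= t -> 2 * t * ln t <= t ^+ 2 - 1.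
Proof.
move=> t_ge1; pose f (v : R) := v ^+ 2 - 1 - 2 * (v * ln v).
suff : f 1 <= f t by rewrite /f ln1; lra.
apply: (@is_derive_ge0_le _ (fun u => 2 * (u - 1 - ln u))) => // u /andP[u_ge1 _];
  have u_gt0 : 0 < u by lra.
- have ln_u := is_derive1_ln u_gt0; apply: is_derive_eq.
  by rewrite /GRing.scale /=; field; rewrite gt_eqF.
- by have := ln_le_sub1 u_gt0; lra.
Qed.

Lemma ln_mulD1_le (t : R) : 0 < t -> t <= 1 -> (t + 1) * ln t <= 2 * (t - 1).
Proof.
move=> t_gt0 t_le1; pose f (v : R) := (v + 1) * ln v - 2 * (v - 1).
suff : f t <= f 1 by rewrite /f ln1; lra.
apply: (@is_derive_ge0_le _ (fun u => ln u + u^-1 - 1)) => // u /andP[tu _];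
  have u_gt0 : 0 < u by lra.
- have ln_u := is_derive1_ln u_gt0; apply: is_derive_eq.
  by rewrite /GRing.scale /=; field; rewrite gt_eqF.
- have uV_gt0 : 0 < u^-1 by rewrite invr_gt0.
  by have := ln_le_sub1 uV_gt0; rewrite lnV ?posrE //; lra.
Qed.

Lemma sub1_mul_ln_le (t : R) : 0 < t ->
  (t - 1) * ln t <= 2 * Num.max t 1 * (t - 1 - ln t).
Proof.
move=> t_gt0; have [t_ge1|t_lt1] := leP 1 t; last first.
  by have := ln_mulD1_le t_gt0 (ltW t_lt1); lra.
have := ln_le_sqr_sub1 t_ge1; have := ln_le_sub1 t_gt0; set l := ln t => l_le sqr_le.
rewrite -subr_ge0 -(pmulr_rge0 _ (_ : 0 < 2 * t)); last lra.
have -> : 2 * t * (2 * t * (t - 1 - l) - (t - 1) * l) =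
  (3 * t - 1) * (t ^+ 2 - 1 - 2 * t * l) + (t - 1) ^+ 3 by ring.
by rewrite addr_ge0 ?exprn_ge0 ?mulr_ge0 //; lra.
Qed.

End LnInequalities.

Section ElemSymIdentities.
Variables (R : comPzRingType) (I : finType) (x : I -> R).
Implicit Types (A S : {set I}) (m : nat).

Definition esym_in A m : R :=
  \sum_(S : {set I} | (S \subset A) && (#|S| == m)) \prod_(i in S) x i.

Lemma esym_in0 A : esym_in A 0 = 1.
Proof.
rewrite /esym_in (big_pred1 set0) ?big_set0 // => S /=.
by rewrite cards_eq0; have [->|_] := eqVneq S set0; rewrite ?sub0set ?andbF.
Qed.

Lemma mulr_esym_inD1 A m j : j \in A ->
  x j * esym_in (A :\ j) m =
  \sum_(S : {set I} | (S \subset A) && (#|S| == m.+1) && (j \in S)) \prod_(i in S) x i.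
Proof.
move=> jA; rewrite /esym_in big_distrr /=; apply/esym.
rewrite (reindex_onto (fun S => j |: S) (fun S => S :\ j)) /=; last first.
  by move=> S /andP[_ jS]; rewrite setD1K.
apply: eq_big => S.
  rewrite setU11 andbT subsetD1; case jS: (j \in S) => /=.
    rewrite andbF andFb; apply/negbTE/negP => /andP[_ /eqP SjS].
    by move: jS; rewrite -SjS !inE eqxx.
  rewrite (setU1K (negbT jS)) eqxx andbT cardsU1 jS /= add1n eqSS.
  by rewrite andbT subUset sub1set jA.
move=> /andP[_ /eqP SjS]; have jS : j \notin S by rewrite -SjS !inE eqxx.
by rewrite big_setU1.
Qed.

Lemma esym_inD1 A m j : j \in A ->
  esym_in A m.+1 = esym_in (A :\ j) m.+1 + x j * esym_in (A :\ j) m.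
Proof.
move=> jA; rewrite mulr_esym_inD1 // {1}/esym_in (bigID (fun S => j \in S)) /= addrC.
by congr (_ + _); apply: eq_bigl => S; rewrite subsetD1 -andbA [(#|S| == _) && _]andbC andbA.
Qed.

Lemma esym_in_setC1_sub m i j : i != j ->
  esym_in [set~ i] m.+1 - esym_in [set~ j] m.+1 = (x j - x i) * esym_in ([set~ i] :\ j) m.
Proof.
move=> ij; have j_in : j \in [set~ i] by rewrite in_setC1 eq_sym.
have i_in : i \in [set~ j] by rewrite in_setC1.
rewrite (esym_inD1 _ j_in) (esym_inD1 _ i_in).
have -> : [set~ j] :\ i = [set~ i] :\ j by apply/setP => y; rewrite !inE andbC.
ring.
Qed.

Lemma natr_mul_esym_inS A m :
  m.+1%:R * esym_in A m.+1 = \sum_(j in A) x j * esym_in (A :\ j) m.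
Proof.
rewrite (eq_bigr _ (fun j jA => mulr_esym_inD1 m jA)) /esym_in mulr_sumr.
rewrite (eq_bigr (fun S => \sum_(j in S) \prod_(i in S) x i)); last first.
  by move=> S /andP[_ /eqP cardS]; rewrite sumr_const cardS mulr_natl.
rewrite (exchange_big_dep (mem A)) /=; last by move=> S j /andP[/subsetP SA _] /SA.
by apply: eq_bigr => j jA; apply: eq_bigl => S.
Qed.

Lemma sum_mulr_esym_inD1 A m :
  \sum_(j in A) x j * esym_in (A :\ j) m =
  \sum_(S : {set I} | (S \subset A) && (#|S| == m))
     (\prod_(i in S) x i) * \sum_(j in A :\: S) x j.
Proof.
under [RHS]eq_bigr do rewrite mulr_sumr.
rewrite (exchange_big_dep (mem A)) /=; last by move=> S j _; rewrite inE => /andP[].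
apply: eq_bigr => j jA; rewrite /esym_in mulr_sumr.
apply: eq_big => [S|S _]; last by rewrite mulrC.
by rewrite subsetD1 in_setD jA; case: (S \subset A); case: (j \in S); case: (#|S| == m).
Qed.

Lemma esym_in_setC1S m i :
  esym_in [set~ i] m.+1 = esym_in [set: I] m.+1 - x i * esym_in [set~ i] m.
Proof. by rewrite (esym_inD1 m (in_setT i)) setTD addrK. Qed.

Lemma natr_mul_esymS m :
  m.+1%:R * esym_in [set: I] m.+1 = \sum_i x i * esym_in [set~ i] m.
Proof.
rewrite natr_mul_esym_inS; under eq_bigl do rewrite in_setT.
by under eq_bigr do rewrite setTD.
Qed.

End ElemSymIdentities.

Section ElemSymBounds.
Variables (R : numDomainType) (I : finType) (x : I -> R).
Hypothesis x_ge0 : forall i, 0 <= x i.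

Lemma esym_in_ge0 A m : 0 <= esym_in x A m.
Proof. by apply: sumr_ge0 => S _; apply: prodr_ge0. Qed.

Lemma esym_in_lower (A : {set I}) m (M : R) : (forall i, x i <= M) ->
  (\sum_(j in A) x j - m%:R * M) * esym_in x A m <= m.+1%:R * esym_in x A m.+1.
Proof.
move=> x_le_M; rewrite natr_mul_esym_inS sum_mulr_esym_inD1 /esym_in mulr_sumr.
apply: ler_sum => S /andP[SA /eqP cardS]; rewrite mulrC ler_wpM2l ?prodr_ge0 //.
rewrite (big_setID S) /= (setIidPr SA) lerBlDl lerD2r.
have -> : m%:R * M = \sum_(i in S) M by rewrite sumr_const cardS mulr_natl.
exact: ler_sum.
Qed.

End ElemSymBounds.

Lemma chebyshev_sum (R : numDomainType) (I : finType) (w f g : I -> R) :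
  (forall i, 0 <= w i) ->
  (forall i j, 0 < w i -> 0 < w j -> (f i - f j) * (g i - g j) <= 0) ->
  (\sum_i w i) * (\sum_i w i * f i * g i) <= (\sum_i w i * f i) * (\sum_i w i * g i).
Proof.
move=> w_ge0 fg_anti.
have double_sum : \sum_i \sum_j w i * w j * (f i - f j) * (g i - g j) =
    2 * ((\sum_i w i) * (\sum_i w i * f i * g i)
         - (\sum_i w i * f i) * (\sum_i w i * g i)).
  transitivity (\sum_i \sum_j ((w i * f i * g i) * w j + w i * (w j * f j * g j)
      - (w i * f i) * (w j * g j) - (w i * g i) * (w j * f j))).
    by apply: eq_bigr => i _; apply: eq_bigr => j _; ring.
  under eq_bigr do rewrite !sumrB big_split /=.
  by rewrite !sumrB big_split /= -!big_distrlr /=; ring.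
have : \sum_i \sum_j w i * w j * (f i - f j) * (g i - g j) <= 0.
  apply: sumr_le0 => i _; apply: sumr_le0 => j _.
  have [->|wi_neq0] := eqVneq (w i) 0; first by rewrite !mul0r.
  have [->|wj_neq0] := eqVneq (w j) 0; first by rewrite mulr0 !mul0r.
  by rewrite -mulrA mulr_ge0_le0 ?mulr_ge0 // fg_anti // lt_def ?wi_neq0 ?wj_neq0 ?w_ge0.
by rewrite double_sum pmulr_rle0 // subr_le0.
Qed.

Section ScaledBinomial.
Variable R : numFieldType.

Definition scaled_binom (s : R) (m : nat) : R :=
  (\prod_(j < m) (1 - j%:R * s)) / m`!%:R.

Lemma scaled_binom0 s : scaled_binom s 0 = 1.
Proof. by rewrite /scaled_binom big_ord0 divr1. Qed.

Lemma scaled_binomS s m :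
  m.+1%:R * scaled_binom s m.+1 = (1 - m%:R * s) * scaled_binom s m.
Proof.
rewrite /scaled_binom big_ord_recr /= factS natrM.
have fact_neq0 : m`!%:R != 0 :> R by rewrite pnatr_eq0 -lt0n fact_gt0.
by field; rewrite fact_neq0 addrC natr1 pnatr_eq0.
Qed.

End ScaledBinomial.

Lemma scaled_binomE (R : realType) (s : R) (m : nat) : s != 0 ->
  s ^+ m * rbinom (1 / s) m = scaled_binom s m.
Proof.
move=> s_neq0; rewrite /rbinom /scaled_binom mulrA; congr (_ / _).
rewrite -[m in s ^+ m]card_ord -prodr_const -big_split /=.
by apply: eq_bigr => j _; field.
Qed.

Section ElemSymBelowScaledBinomial.
Variables (R : realType) (I : finType) (x : I -> R) (M s : R).
Hypotheses (x_ge0 : forall i, 0 <= x i) (sum_x : \sum_i x i = 1).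
Hypotheses (x_le_M : forall i, x i <= M) (s_gt0 : 0 < s).
Hypothesis ln_s : ln s = \sum_i x i * ln (x i).

Local Notation e m := (esym_in x [set: I] m).
Local Notation E m i := (esym_in x [set~ i] m).
Let s_ge0 : 0 <= s := ltW s_gt0.
Let logr i := ln (x i) - ln s.
Let gap i := x i - s - s * logr i.

Let x_gt0 i : x i != 0 -> 0 < x i.
Proof. by rewrite lt0r x_ge0 andbT. Qed.

Lemma sum_x_logr : \sum_i x i * logr i = 0.
Proof.
under eq_bigr do rewrite /logr mulrBr.
by rewrite sumrB -mulr_suml sum_x mul1r ln_s subrr.
Qed.

Lemma s_le_M : s <= M.
Proof.
have [i xi_gt0] : exists i, 0 < x i.
  apply/existsP; apply: contraT; rewrite negb_exists => /forallP x_le0.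
  suff : \sum_i x i = 0 by rewrite sum_x => /eqP; rewrite oner_eq0.
  by apply: big1 => i _; apply/eqP; rewrite eq_le x_ge0 andbT leNgt x_le0.
have M_gt0 : 0 < M := lt_le_trans xi_gt0 (x_le_M i).
rewrite -ler_ln ?posrE // ln_s -[ln M]mul1r -sum_x mulr_suml.
apply: ler_sum => j _; have [->|/x_gt0 xj_gt0] := eqVneq (x j) 0; first by rewrite !mul0r.
by rewrite ler_wpM2l ?x_ge0 // ler_ln ?posrE // (lt_le_trans xj_gt0).
Qed.

Lemma gapE i : 0 < x i -> gap i = s * (x i / s - 1 - ln (x i / s)).
Proof. by move=> xi_gt0; rewrite /gap /logr ln_div ?posrE //; field; rewrite gt_eqF. Qed.

Lemma gap_ge0 i : 0 < x i -> 0 <= gap i.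
Proof.
move=> xi_gt0; rewrite gapE //; apply: mulr_ge0; first exact: ltW.
by rewrite subr_ge0 ln_le_sub1 // divr_gt0.
Qed.

Lemma gap_gt0 i : 0 < x i -> x i != s -> 0 < gap i.
Proof.
move=> xi_gt0 xi_neq_s; rewrite gapE // pmulr_rgt0 // subr_gt0.
by rewrite ln_lt_sub1 ?divr_gt0 //; apply: contra_neq xi_neq_s => /divr1_eq.
Qed.

Lemma logr_le_gap i : 0 < x i -> s * (x i - s) * logr i <= 2 * M * gap i.
Proof.
move=> xi_gt0; have logrE : logr i = ln (x i / s) by rewrite /logr ln_div ?posrE.
rewrite logrE gapE //; have t_gt0 : 0 < x i / s by rewrite divr_gt0.
have := sub1_mul_ln_le t_gt0; set t := x i / s => ln_le.
have xE : x i = s * t by rewrite /t mulrC divfK ?gt_eqF.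
have max_le : s * Num.max t 1 <= M.
  by rewrite maxr_pMr ?s_ge0 // mulr1 -xE ge_max x_le_M s_le_M.
have t_gap : 0 <= t - 1 - ln t by rewrite subr_ge0 ln_le_sub1.
rewrite xE; apply: le_trans (_ : s * s * (2 * Num.max t 1 * (t - 1 - ln t)) <= _).
  have -> : s * (s * t - s) * ln t = s * s * ((t - 1) * ln t) by ring.
  by rewrite ler_wpM2l ?mulr_ge0.
have -> : s * s * (2 * Num.max t 1 * (t - 1 - ln t)) =
  2 * (s * Num.max t 1) * (s * (t - 1 - ln t)) by ring.
by rewrite ler_wpM2r ?mulr_ge0 // ler_wpM2l.
Qed.

Lemma esym_setC1_lower i p : (1 - x i - p%:R * M) * E p i <= p.+1%:R * E p.+1 i.
Proof.
have sum_setC1 : \sum_(j in [set~ i]) x j = 1 - x i.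
  rewrite -sum_x [X in _ = X - _](bigD1 i) //= addrC addrK.
  by apply: eq_bigl => j; rewrite in_setC1.
by have := esym_in_lower x_ge0 [set~ i] p x_le_M; rewrite sum_setC1.
Qed.

Lemma logr_esym_le_gap_esym i p : 0 < x i -> 3 * p.+1%:R * M <= 1 ->
  s * (x i - s) * logr i * E p i <= gap i * E p.+1 i.
Proof.
move=> xi_gt0 M_small; set P : R := p.+1%:R.
have P_gt0 : 0 < P by rewrite ltr0n.
have E_ge0 : 0 <= E p i := esym_in_ge0 x_ge0 _ _.
have gapi_ge0 := gap_ge0 xi_gt0.
rewrite -(ler_pM2l P_gt0).
apply: le_trans (_ : P * (2 * M * gap i * E p i) <= _).
  by rewrite ler_pM2l //; apply: ler_wpM2r => //; exact: logr_le_gap.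
apply: le_trans (_ : gap i * ((1 - x i - p%:R * M) * E p i) <= _); last first.
  by rewrite [X in _ <= X]mulrCA ler_wpM2l // esym_setC1_lower.
have -> : P * (2 * M * gap i * E p i) = gap i * ((2 * P * M) * E p i) by ring.
rewrite ler_wpM2l // ler_wpM2r //.
have pE : p%:R = P - 1 by rewrite /P -natr1 addrK.
by have := x_le_M i; rewrite pE; lra.
Qed.

Lemma sum_logr_esym_le0 p : \sum_i x i * logr i * E p i <= 0.
Proof.
have anti i j : 0 < x i -> 0 < x j -> (logr i - logr j) * (E p i - E p j) <= 0.
  move=> xi_gt0 xj_gt0; case: p => [|p]; first by rewrite !esym_in0 subrr mulr0.
  have [->|ij] := eqVneq i j; first by rewrite subrr mul0r.
  have -> : logr i - logr j = ln (x i) - ln (x j) by rewrite /logr; ring.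
  rewrite esym_in_setC1_sub // mulrA; apply: mulr_le0_ge0; last exact: esym_in_ge0.
  by rewrite -[x j - x i]opprB mulrN oppr_le0 ln_sub_mul_sub_ge0.
have := @chebyshev_sum _ _ x logr (fun i => E p i) x_ge0 anti.
by rewrite sum_x sum_x_logr mul1r mul0r.
Qed.

Lemma sum_x_sub_s_esym_ge0 p : 3 * p.+1%:R * M <= 1 ->
  0 <= \sum_i x i * (x i - s) * E p.+1 i.
Proof.
move=> M_small.
have split_term i : x i * (x i - s) * E p.+1 i =
    x i * (gap i * E p.+1 i - s * (x i - s) * logr i * E p i)
    + s * e p.+1 * (x i * logr i) - s ^+ 2 * (x i * logr i * E p i).
  by rewrite /gap !esym_in_setC1S; ring.
rewrite (eq_bigr _ (fun i _ => split_term i)) !sumrB big_split /=.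
rewrite -!mulr_sumr sum_x_logr mulr0 addr0; apply: addr_ge0.
  apply: sumr_ge0 => i _; have [->|/x_gt0 xi_gt0] := eqVneq (x i) 0; first by rewrite mul0r.
  by rewrite mulr_ge0 ?x_ge0 // subr_ge0 logr_esym_le_gap_esym.
by rewrite oppr_ge0 mulr_ge0_le0 ?exprn_ge0 // sum_logr_esym_le0.
Qed.

Lemma esym1 : e 1 = 1.
Proof.
have := natr_mul_esymS x 0; rewrite mul1r => ->.
by under eq_bigr do rewrite esym_in0 mulr1.
Qed.

Lemma esymSS m : m.+2%:R * e m.+2 = e m.+1 - \sum_i x i ^+ 2 * E m i.
Proof.
rewrite natr_mul_esymS; under eq_bigr do rewrite esym_in_setC1S mulrBr mulrA -expr2.
by rewrite sumrB -mulr_suml sum_x mul1r.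
Qed.

Lemma esym_step p : 3 * p.+1%:R * M <= 1 ->
  p.+3%:R * e p.+3 <= (1 - p.+2%:R * s) * e p.+2.
Proof.
move=> M_small; have := sum_x_sub_s_esym_ge0 M_small.
have -> : \sum_i x i * (x i - s) * E p.+1 i =
    \sum_i x i ^+ 2 * E p.+1 i - s * (p.+2%:R * e p.+2).
  by rewrite natr_mul_esymS mulr_sumr -sumrB; apply: eq_bigr => i _; ring.
by rewrite (esymSS p.+1); lra.
Qed.

Lemma esym2_lt : (exists i, 0 < x i /\ x i != s) -> 2 * e 2 < 1 - s.
Proof.
case=> i [xi_gt0 xi_neq_s]; have := esymSS 0; rewrite esym1 => ->.
rewrite ltrD2l ltrN2; under eq_bigr do rewrite esym_in0 mulr1.
have sum_gap : \sum_i x i * gap i = \sum_i x i ^+ 2 - s.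
  transitivity (\sum_i x i ^+ 2 - s * \sum_i x i - s * \sum_i x i * logr i).
    by rewrite !mulr_sumr -!sumrB; apply: eq_bigr => j _; rewrite /gap; ring.
  by rewrite sum_x sum_x_logr; ring.
rewrite -subr_gt0 -sum_gap (bigD1 i) //= ltr_pwDl ?mulr_gt0 ?gap_gt0 //.
apply: sumr_ge0 => j _; have [->|/x_gt0 xj_gt0] := eqVneq (x j) 0; first by rewrite mul0r.
by rewrite mulr_ge0 ?gap_ge0 ?x_ge0.
Qed.

Lemma esym_lt_scaled_binom p : (exists i, 0 < x i /\ x i != s) ->
  3 * p%:R * M <= 1 -> e p.+2 < scaled_binom s p.+2.
Proof.
move=> x_neq_s; elim: p => [_|p IH M_small].
  have b1 : scaled_binom s 1 = 1.
    by have := scaled_binomS s 0; rewrite scaled_binom0 mul0r subr0 !mul1r.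
  have := scaled_binomS s 1; rewrite b1 mul1r mulr1.
  by have := esym2_lt x_neq_s; lra.
have M_gt0 : 0 < M := lt_le_trans s_gt0 s_le_M.
have step_gt0 : 0 < 1 - p.+2%:R * s.
  have : p.+2%:R * M < 3 * p.+1%:R * M.
    by rewrite ltr_pM2r // -natrM ltr_nat; lia.
  have : p.+2%:R * s <= p.+2%:R * M by rewrite ler_pM2l ?ltr0n ?s_le_M.
  lra.
rewrite -(ltr_pM2l (ltr0n R p.+3)) scaled_binomS.
apply: le_lt_trans (esym_step M_small) _; rewrite ltr_pM2l //; apply: IH.
by apply: le_trans M_small; rewrite ler_wpM2r ?(ltW M_gt0) // ler_wpM2l // ler_nat.
Qed.

End ElemSymBelowScaledBinomial.

Lemma sigmaE (R : realType) (n : nat) (x : 'I_n -> R) :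
  sigma x = expR (\sum_i x i * ln (x i)).
Proof.
rewrite /sigma expR_sum; apply: eq_bigr => i _.
by rewrite /powR; case: eqP => [->|//]; rewrite mul0r expR0.
Qed.

Lemma elem_symE (R : realType) (n k : nat) (x : 'I_n -> R) :
  elem_sym k x = esym_in x [set: 'I_n] k.
Proof. by apply: eq_bigl => S; rewrite subsetT. Qed.

Theorem theorem2 (R : realType) (n k : nat) (x : 'I_n -> R) :
  (3 <= k)%N ->
  in_simplex x ->
  max_entry x <= 1 / (4 * (k%:R - 2)) ->
  (exists i j : 'I_n, [/\ x i != 0, x j != 0 & x i != x j]) ->
  elem_sym k x < sigma x ^+ k * rbinom (1 / sigma x) k.
Proof.
move=> k_ge3 [x_ge0 sum_x] x_max [i [j [xi_neq0 xj_neq0 xij]]].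
have x_le_max l : x l <= max_entry x := le_bigmax 0 x l.
have sigma_gt0 : 0 < sigma x by rewrite sigmaE expR_gt0.
have ln_sigma : ln (sigma x) = \sum_l x l * ln (x l) by rewrite sigmaE expRK.
have x_neq_sigma : exists l, 0 < x l /\ x l != sigma x.
  have [xi_sigma|xi_neq_sigma] := eqVneq (x i) (sigma x).
    by exists j; rewrite lt0r xj_neq0 x_ge0 -xi_sigma eq_sym.
  by exists i; rewrite lt0r xi_neq0 x_ge0.
case: k k_ge3 x_max => [|[|p]] // p_gt0 x_max.
rewrite elem_symE scaled_binomE ?gt_eqF //.
apply: (esym_lt_scaled_binom x_ge0 sum_x x_le_max sigma_gt0 ln_sigma x_neq_sigma).
have p_pos : 0 < p%:R :> R by rewrite ltr0n.
have max_ge0 : 0 <= max_entry x := le_trans (x_ge0 i) (x_le_max i).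
move: x_max; have -> : p.+2%:R - 2 = p%:R :> R by rewrite -[p.+2]addn2 natrD addrK.
rewrite ler_pdivlMr ?mulr_gt0 //; nra.
Qed.
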